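(* Let $R$ be an integral domain with field of fractions $K$, and let $n$ be a nonnegative integer. If $D\colon R\to R$ belongs to the closure of $\mathcal{O}^n_0(R)$ in $R^R$, then $D/j$ (i.e. $x\mapsto D(x)/x$), as a map from the semigroup $R^*$ to $K$, is a generalized polynomial of degree at most $n$.
   Context: Rings are commutative with unit. A derivation on $R$ is a map $d\colon R\to R$ with $d(x+y)=d(x)+d(y)$ and $d(xy)=d(x)y+d(y)x$. A differential operator of degree at most $n$ on $R$ is an $R$-linear combination of finitely many maps $d_1\circ\cdots\circ d_k$, $d_i$ derivations, $k\le n$ (for $k=0$ the identity map $j$). $\mathcal{O}^n_0(R)$ is the set of such operators $D$ with $D(1)=0$. $R^R$ carries the product topology with $R$ discrete. $R^*$ is the semigroup $R\setminus\{0\}$ under multiplication. For $f$ on an abelian semigroup $G$, $\Delta_g f(x)=f(x\cdot g)-f(x)$; $f$ is a generalized polynomial of degree at most $n$ if $\Delta_{g_1}\cdots\Delta_{g_{n+1}}f=0$ for all $g_1,\dots,g_{n+1}\in G$. *)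

From Stdlib Require List.
From HB Require Import structures.
From mathcomp Require Import all_boot all_order all_algebra.
Set Implicit Arguments. Unset Strict Implicit. Unset Printing Implicit Defensive.
Import GRing.Theory.
Local Open Scope ring_scope.

Definition is_derivation (R : comNzRingType) (d : R -> R) : Prop :=
  (forall x y, d (x + y) = d x + d y) /\
  (forall x y, d (x * y) = d x * y + d y * x).

Definition comp_list (R : Type) (ds : seq (R -> R)) : R -> R :=
  foldr (fun d f => d \o f) id ds.

Definition is_diff_op (R : comNzRingType) (n : nat) (D : R -> R) : Prop :=
  exists terms : seq (R * seq (R -> R)),
    (forall t, List.In t terms ->
       (size t.2 <= n)%N /\ forall d, List.In d t.2 -> is_derivation d) /\
    forall x, D x = \sum_(t <- terms) t.1 * comp_list t.2 x.

Definition O_n_0 (R : comNzRingType) (n : nat) (D : R -> R) : Prop :=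
  is_diff_op n D /\ D 1 = 0.

(* Closure in R^R with the product topology, R discrete:
   D is in the closure of S iff every basic neighbourhood of D
   (maps agreeing with D on a finite set of points) meets S. *)
Definition in_pointwise_closure (R : Type) (S : (R -> R) -> Prop)
    (D : R -> R) : Prop :=
  forall F : seq R, exists D', S D' /\ forall x, List.In x F -> D' x = D x.

(* Difference operator on functions from the multiplicative semigroup R^*
   (represented as functions on R, only evaluated at nonzero points). *)
Definition Delta (R : comNzRingType) (V : zmodType) (g : R) (f : R -> V) : R -> V :=
  fun x => f (x * g) - f x.

Definition gen_poly_semigroup (R : comNzRingType) (V : zmodType) (n : nat)
    (f : R -> V) : Prop :=
  forall gs : seq R, size gs = n.+1 -> (forall g, g \in gs -> g != 0) ->
    forall x : R, x != 0 -> foldr (@Delta R V) f gs x = 0.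

(* For a composition w of k derivations, the general Leibniz rule gives
   w(xg) = w(x) g + sum_i u_i(x) v_i(g) with every u_i a composition of fewer
   than k of the same derivations.  Dividing by xg, Delta_g (w/j) is a
   combination, with coefficients depending only on g, of functions u_i/j of
   lower order; by induction any k+1 differences kill w/j, and by linearity
   any n+1 differences kill D/j for D in O^n_0(R).  An iterated difference at
   x only involves the values of the function at finitely many points, where a
   D in the closure agrees with some operator of O^n_0(R). *)
From HB Require Import structures.
From mathcomp Require Import all_boot all_order all_algebra.
Set Implicit Arguments. Unset Strict Implicit. Unset Printing Implicit Defensive.
Import GRing.Theory.
Local Open Scope ring_scope.

Lemma big1_In (V : nmodType) (I : Type) (s : seq I) (F : I -> V) :
  (forall i, List.In i s -> F i = 0) -> \sum_(i <- s) F i = 0.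
Proof.
elim: s => [|i s IHs] F0; first by rewrite big_nil.
by rewrite big_cons F0 ?IHs ?add0r //; [move=> j sj; apply: F0; right | left].
Qed.

Section IteratedDifferences.
Variable R : comNzRingType.

Lemma foldr_Delta_sum (V : pzRingType) (I : Type) (s : seq I) (a : I -> V)
    (fs : I -> R -> V) (gs : seq R) (f : R -> V) :
  (forall x, f x = \sum_(i <- s) a i * fs i x) ->
  forall x, foldr (@Delta R V) f gs x
            = \sum_(i <- s) a i * foldr (@Delta R V) (fs i) gs x.
Proof.
move=> Ef; elim: gs => [|g gs IHgs] x //=.
by rewrite /Delta !IHgs -sumrB; apply: eq_bigr => i _; rewrite mulrBr.
Qed.

Fixpoint Delta_points (gs : seq R) (x : R) : seq R :=
  if gs is g :: gs' then Delta_points gs' (x * g) ++ Delta_points gs' x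
  else [:: x].

Lemma foldr_Delta_local (V : zmodType) (gs : seq R) (f f' : R -> V) (x : R) :
  (forall y, List.In y (Delta_points gs x) -> f y = f' y) ->
  foldr (@Delta R V) f gs x = foldr (@Delta R V) f' gs x.
Proof.
elim: gs x => [|g gs IHgs] x ff' /=; first by apply: ff'; left.
by rewrite /Delta !IHgs // => y Py; apply: ff'; apply: List.in_or_app; [right|left].
Qed.

End IteratedDifferences.

Section Leibniz.
Variable R : comNzRingType.

Definition derivations (ws : seq (R -> R)) : Prop :=
  forall d, List.In d ws -> is_derivation d.

Lemma derivation_sum (d : R -> R) (I : Type) (s : seq I) (F : I -> R) :
  is_derivation d -> d (\sum_(i <- s) F i) = \sum_(i <- s) d (F i).
Proof.
move=> [dD _]; have d0 : d 0 = 0 by apply: (addIr (d 0)); rewrite -dD !add0r.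
by elim: s => [|i s IHs]; rewrite ?big_nil // !big_cons dD IHs.
Qed.

(* The pairs (u, v) of complementary subwords of ws, except (ws, [::]). *)
Fixpoint leibniz_terms (ws : seq (R -> R)) : seq (seq (R -> R) * seq (R -> R)) :=
  if ws is d :: ws' then
    (ws', [:: d]) :: [seq (d :: p.1, p.2) | p <- leibniz_terms ws']
                  ++ [seq (p.1, d :: p.2) | p <- leibniz_terms ws']
  else [::].

Lemma leibniz_terms_lower (ws : seq (R -> R)) p :
  List.In p (leibniz_terms ws) ->
  (size p.1 < size ws)%N /\ forall d, List.In d p.1 -> List.In d ws.
Proof.
elim: ws p => [|d ws IHws] p //= [<-|]; first by split=> // e; right.
move=> /(@List.in_app_or _ _ _ _) [] /List.in_map_iff [q [<- qws]] /=;
  have [ltq subq] := IHws q qws.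
  by split=> // e [<-|/subq]; [left | right].
by split; [apply: ltnW | move=> e /subq; right].
Qed.

Lemma comp_list_mul (ws : seq (R -> R)) (x g : R) : derivations ws ->
  comp_list ws (x * g) = comp_list ws x * g
    + \sum_(p <- leibniz_terms ws) comp_list p.1 x * comp_list p.2 g.
Proof.
elim: ws => [|d ws IHws] dws /=; first by rewrite big_nil addr0.
have dd : is_derivation d by apply: dws; left.
have [dD dM] := dd.
rewrite IHws; last by move=> e we; apply: dws; right.
rewrite dD dM derivation_sum // big_cons big_cat !big_map /=.
under eq_bigr => p _ do rewrite dM.
rewrite big_split /= !addrA [d g * _]mulrC.
by congr (_ + _); apply: eq_bigr => p _; rewrite mulrC.
Qed.

End Leibniz.

Section DivisionByIdentity.
Variable R : idomainType.
Notation tf := (@FracField.tofrac R).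
Notation K := {fraction R}.

Definition divj (h : R -> R) : R -> K := fun x => tf (h x) / tf x.

Lemma Delta_divj_comp_list (ws : seq (R -> R)) (g x : R) :
  derivations ws -> g != 0 ->
  Delta g (divj (comp_list ws)) x
  = \sum_(p <- leibniz_terms ws) divj (comp_list p.2) g * divj (comp_list p.1) x.
Proof.
move=> dws g0; rewrite /Delta /divj.
have [->|x0] := eqVneq x 0.
  by rewrite mul0r subrr tofrac0 invr0 big1 // => p _; rewrite !mulr0.
have tfx0 : tf x != 0 by rewrite tofrac_eq0.
have tfg0 : tf g != 0 by rewrite tofrac_eq0.
rewrite comp_list_mul // rmorphD rmorph_sum !rmorphM.
rewrite mulrDl -mulf_div divff // mulr1 addrC addKr mulr_suml.
by apply: eq_bigr => p _; rewrite rmorphM -mulf_div mulrC.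
Qed.

Lemma foldr_Delta_divj_comp_list (ws : seq (R -> R)) (gs : seq R) (x : R) :
  derivations ws -> (size ws < size gs)%N -> (forall g, g \in gs -> g != 0) ->
  foldr (@Delta R K) (divj (comp_list ws)) gs x = 0.
Proof.
elim/last_ind: gs ws => [|gs g IHgs] ws // dws; rewrite size_rcons ltnS => wgs gs0.
rewrite foldr_rcons.
have g0 : g != 0 by apply: gs0; rewrite mem_rcons mem_head.
rewrite (foldr_Delta_sum _ (fun x => Delta_divj_comp_list x dws g0)).
apply: big1_In => p /leibniz_terms_lower [ltp subp].
rewrite IHgs ?mulr0 //.
- by move=> d /subp; apply: dws.
- exact: leq_trans ltp wgs.
- by move=> h hgs; apply: gs0; rewrite mem_rcons in_cons hgs orbT.
Qed.

Lemma gen_poly_divj_diff_op (n : nat) (D : R -> R) :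
  is_diff_op n D -> gen_poly_semigroup n (divj D).
Proof.
move=> [terms [terms_ok ED]] gs sgs gs0 x _.
have divjD y : divj D y
    = \sum_(t <- terms) tf t.1 * divj (comp_list t.2) y.
  rewrite /divj ED rmorph_sum mulr_suml.
  by apply: eq_bigr => t _; rewrite rmorphM mulrA.
rewrite (foldr_Delta_sum _ divjD); apply: big1_In => t /terms_ok [st dt].
by rewrite foldr_Delta_divj_comp_list ?mulr0 // sgs ltnS.
Qed.

End DivisionByIdentity.

Theorem lemma2p5 (R : idomainType) (n : nat) (D : R -> R) :
  in_pointwise_closure (@O_n_0 R n) D ->
  gen_poly_semigroup n
    (fun x : R => @FracField.tofrac R (D x) / @FracField.tofrac R x).
Proof.
move=> closD gs sgs gs0 x x0.
have [D' [[opD' _] D'D]] := closD (Delta_points gs x).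
rewrite (foldr_Delta_local (f' := divj D')) => [|y /D'D].
  exact: gen_poly_divj_diff_op opD' gs sgs gs0 x x0.
by rewrite /divj => ->.
Qed.
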